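(* For every set $A$, the lattice of all clones on $A$ (ordered by inclusion) is isomorphic to the lattice of all subalgebras of the full block algebra on $A$.
   Context: Finitary operations on $A$ include nullary ones (elements of $A$). A clone on $A$ is a set of finitary operations on $A$ that contains all projections $p^{(n)}_i(a_1,\dots,a_n)=a_i$, is closed under composition (if $f$ is $n$-ary and $g_1,\dots,g_n$ are $k$-ary in the set, $k\ge0$, then $\mathbf a\mapsto f(g_1(\mathbf a),\dots,g_n(\mathbf a))$ on $A^k$ is in the set) and under restriction (if an $n$-ary $f$, $n\ge1$, does not depend on its last argument, then the $(n-1)$-ary $g(a_1,\dots,a_{n-1})=f(a_1,\dots,a_{n-1},b)$ is in the set). Let $\omega=\{1,2,\dots\}$. The top extension of $f:A^n\to A$ is $f^\top:A^\omega\to A$, $f^\top(s)=f(s_1,\dots,s_n)$. The full block algebra on $A$ is the algebra with universe $\{f^\top: f\text{ a finitary operation on }A\}$, nullary operations $\mathsf e_i(s)=s_i$ ($i\ge 1$) and $(n+1)$-ary operations $q_n(\varphi,\psi_1,\dots,\psi_n)(s)=\varphi(s[\psi_1(s),\dots,\psi_n(s)])$ ($n\ge0$), where $s[b_1,\dots,b_n]$ replaces the first $n$ entries of $s$ by $b_1,\dots,b_n$. *)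

From mathcomp Require Import all_boot.
Set Implicit Arguments. Unset Strict Implicit. Unset Printing Implicit Defensive.

(* A finitary operation on A: an arity n together with f : A^n -> A,
   where A^n is represented as 'I_n -> A.  Arity 0 = nullary operations. *)
Definition op (A : Type) := {n : nat & ('I_n -> A) -> A}.

Definition mkop (A : Type) (n : nat) (f : ('I_n -> A) -> A) : op A :=
  existT (fun m => ('I_m -> A) -> A) n f.

Definition snoc (A : Type) (n : nat) (a : 'I_n -> A) (b : A) : 'I_n.+1 -> A :=
  fun i => match (insub (val i) : option 'I_n) with
           | Some j => a j
           | None => b
           end.

Definition is_clone (A : Type) (C : op A -> Prop) : Prop :=
  (forall (n : nat) (i : 'I_n), C (@mkop A n (fun a => a i))) /\
  (forall (n k : nat) (f : ('I_n -> A) -> A) (g : 'I_n -> ('I_k -> A) -> A),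
      C (mkop f) -> (forall i, C (mkop (g i))) ->
      C (@mkop A k (fun a => f (fun i => g i a)))) /\
  (forall (n : nat) (f : ('I_n.+1 -> A) -> A),
      C (mkop f) ->
      (forall a b b', f (snoc a b) = f (snoc a b')) ->
      forall g : ('I_n -> A) -> A,
        (forall a b, g a = f (snoc a b)) -> C (mkop g)).

(* Infinite sequences s = (s_1, s_2, ...) are modelled as nat -> A,
   with s_{i+1} stored at index i. *)
Definition top (A : Type) (n : nat) (f : ('I_n -> A) -> A) : (nat -> A) -> A :=
  fun s => f (fun i => s (val i)).

Definition block_univ (A : Type) (phi : (nat -> A) -> A) : Prop :=
  exists (n : nat) (f : ('I_n -> A) -> A), phi = top f.

(* nullary operations e_{i+1} *)
Definition blk_e (A : Type) (i : nat) : (nat -> A) -> A := fun s => s i.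

Definition seq_upd (A : Type) (n : nat) (s : nat -> A) (b : 'I_n -> A) : nat -> A :=
  fun k => match (insub k : option 'I_n) with
           | Some j => b j
           | None => s k
           end.

Definition blk_q (A : Type) (n : nat) (phi : (nat -> A) -> A)
    (psi : 'I_n -> (nat -> A) -> A) : (nat -> A) -> A :=
  fun s => phi (seq_upd s (fun i => psi i s)).

Definition is_block_subalgebra (A : Type) (S : ((nat -> A) -> A) -> Prop) : Prop :=
  (forall phi, S phi -> block_univ phi) /\
  (forall i, S (@blk_e A i)) /\
  (forall (n : nat) phi (psi : 'I_n -> (nat -> A) -> A),
      S phi -> (forall i, S (psi i)) -> S (blk_q phi psi)).

Definition subset_of (T : Type) (X Y : T -> Prop) : Prop := forall x, X x -> Y x.

From mathcomp Require Import all_boot.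
From Stdlib Require Import FunctionalExtensionality PropExtensionality IndefiniteDescription.

Set Implicit Arguments. Unset Strict Implicit. Unset Printing Implicit Defensive.

(* The isomorphism is C |-> {f^T : f in C}.  Top extension only forgets
   dummy trailing arguments, and a clone is closed under adding them
   (composition with projections) and removing them (restriction), so
   f \in C iff f^T \in C^T; this makes the map an order embedding.  Under
   top extension projections become the e_i and composition becomes q_n, so
   C^T is a subalgebra, and a subalgebra S is the image of the clone
   {f | f^T \in S}. *)

Section BlockAlgebra.
Variable A : Type.

Definition widen_op n m (H : n <= m) (f : ('I_n -> A) -> A) : ('I_m -> A) -> A :=
  fun b => f (fun i => b (widen_ord H i)).

Lemma widen_op_id n (H : n <= n) (f : ('I_n -> A) -> A) : widen_op H f = f.
Proof.
apply: functional_extensionality => b; rewrite /widen_op; congr f.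
by apply: functional_extensionality => i; congr b; apply: val_inj.
Qed.

Lemma mkop_projT2 (x : op A) : mkop (projT2 x) = x.
Proof. by case: x. Qed.

Lemma snoc_val k (a : 'I_k -> A) b (x : 'I_k.+1) (j : 'I_k) :
  val x = val j -> snoc a b x = a j.
Proof.
rewrite /snoc => xj; case: insubP => [j' _ j'x | ]; last by rewrite xj ltn_ord.
by congr a; apply: val_inj; rewrite j'x xj.
Qed.

Lemma snoc_prefix (s : nat -> A) k :
  snoc (fun i : 'I_k => s (val i)) (s k) = fun i => s (val i).
Proof.
apply: functional_extensionality => x; rewrite /snoc; case: insubP => [j _ -> // | ].
rewrite -leqNgt => kx; suff -> : val x = k by [].
by apply/eqP; rewrite eqn_leq kx -ltnS ltn_ord.
Qed.

Lemma top_widen_op n m (H : n <= m) (f : ('I_n -> A) -> A) : top (widen_op H f) = top f.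
Proof. by []. Qed.

Lemma top_seq_upd n (f : ('I_n -> A) -> A) s a : top f (seq_upd s a) = f a.
Proof.
rewrite /top /seq_upd; congr f.
by apply: functional_extensionality => i; rewrite valK.
Qed.

Lemma top_inj n : injective (@top A n).
Proof.
move=> f g fg; apply: functional_extensionality => a.
by rewrite -(top_seq_upd f (fun=> f a)) fg top_seq_upd.
Qed.

Lemma top_comp n k (f : ('I_n -> A) -> A) (g : 'I_n -> ('I_k -> A) -> A) :
  top (fun a => f (fun i => g i a)) = blk_q (top f) (fun i => top (g i)).
Proof. by apply: functional_extensionality => s; rewrite /blk_q top_seq_upd. Qed.

Lemma blk_q_top N n (f : ('I_N -> A) -> A) (g : 'I_n -> ('I_N -> A) -> A) :
  blk_q (top f) (fun i => top (g i)) =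
  top (fun a => f (fun j => if (insub (val j) : option 'I_n) is Some i then g i a else a j)).
Proof. by []. Qed.

Section Clone.
Variable C : op A -> Prop.
Hypothesis C_clone : is_clone C.

Lemma clone_proj n (i : 'I_n) : C (mkop (fun a => a i)).
Proof. by case: C_clone. Qed.

Lemma clone_comp n k (f : ('I_n -> A) -> A) (g : 'I_n -> ('I_k -> A) -> A) :
  C (mkop f) -> (forall i, C (mkop (g i))) -> C (mkop (fun a => f (fun i => g i a))).
Proof. by case: C_clone => _ [comp _]; apply: comp. Qed.

Lemma clone_restr n (f : ('I_n.+1 -> A) -> A) (g : ('I_n -> A) -> A) :
  C (mkop f) -> (forall a b, g a = f (snoc a b)) -> C (mkop g).
Proof.
case: C_clone => _ [_ restr] Cf fg.
by apply: (restr _ f Cf _ g fg) => a b b'; rewrite -!fg.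
Qed.

Lemma clone_widen n m (H : n <= m) (f : ('I_n -> A) -> A) :
  C (mkop f) -> C (mkop (widen_op H f)).
Proof.
move=> Cf; apply: (clone_comp (g := fun i b => b (widen_ord H i))) Cf _ => i.
exact: clone_proj.
Qed.

Lemma clone_widenK n m (H : n <= m) (f : ('I_n -> A) -> A) :
  C (mkop (widen_op H f)) -> C (mkop f).
Proof.
have [d md] : exists d, m = d + n by exists (m - n); rewrite subnK.
subst m; elim: d H => [|d IH] H Cf; first by rewrite widen_op_id in Cf.
apply: (IH (leq_addl d n)); apply: clone_restr Cf _ => a b.
rewrite /widen_op; congr f; apply: functional_extensionality => i.
by apply/esym/snoc_val.
Qed.

Lemma clone_top_eq n m (f : ('I_n -> A) -> A) (g : ('I_m -> A) -> A) :
  top f = top g -> C (mkop g) -> C (mkop f).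
Proof.
move=> fg Cg; apply: (clone_widenK (H := leq_maxl n m)).
have -> : widen_op (leq_maxl n m) f = widen_op (leq_maxr n m) g.
  by apply: top_inj; rewrite !top_widen_op.
exact: clone_widen.
Qed.

End Clone.

Definition tops (C : op A -> Prop) : ((nat -> A) -> A) -> Prop :=
  fun phi => exists n (f : ('I_n -> A) -> A), C (mkop f) /\ phi = top f.

Definition untop (S : ((nat -> A) -> A) -> Prop) : op A -> Prop :=
  fun o => S (top (projT2 o)).

Lemma tops_common_arity C n k (psi : 'I_n -> (nat -> A) -> A) :
  is_clone C -> (forall i, tops C (psi i)) ->
  exists N (g : 'I_n -> ('I_N -> A) -> A),
    [/\ k <= N, forall i, C (mkop (g i)) & psi = fun i => top (g i)].
Proof.
move=> C_clone Cpsi.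
have [X CX] : exists X : 'I_n -> op A, forall i, C (X i) /\ psi i = top (projT2 (X i)).
  apply: (functional_choice (fun i (x : op A) => C x /\ psi i = top (projT2 x))) => i.
  by have [m [g [Cg ->]]] := Cpsi i; exists (mkop g).
pose N := maxn k (\max_(i < n) projT1 (X i)).
have leXN i : projT1 (X i) <= N by rewrite leq_max (leq_bigmax i) orbT.
exists N, (fun i => widen_op (leXN i) (projT2 (X i))); split => [|i|].
- exact: leq_maxl.
- by apply: (clone_widen C_clone); rewrite mkop_projT2; case: (CX i).
- by apply: functional_extensionality => i; rewrite top_widen_op; case: (CX i).
Qed.

Lemma tops_subalgebra C : is_clone C -> is_block_subalgebra (tops C).
Proof.
move=> C_clone; split; first by move=> _ [n [f [_ ->]]]; exists n, f.
split; first by move=> i; exists i.+1, (fun a => a ord_max); split; first exact: clone_proj.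
move=> n _ psi [k [f [Cf ->]]] /(tops_common_arity k C_clone) [N [g [leN Cg ->]]].
rewrite -(top_widen_op leN f) blk_q_top; do 2 eexists; split; last by [].
apply: (clone_comp C_clone) => [|j]; first exact: clone_widen.
by case: insub => [i|]; [exact: Cg | exact: clone_proj].
Qed.

Lemma tops_subsetP (C1 C2 : op A -> Prop) :
  is_clone C2 -> subset_of C1 C2 <-> subset_of (tops C1) (tops C2).
Proof.
move=> C2_clone; split => [sub _ [n [f [C1f ->]]] | sub [n f] C1f].
  by exists n, f; split => //; apply: sub.
have [m [g [C2g fg]]] : tops C2 (top f) by apply: sub; exists n, f.
exact: clone_top_eq fg C2g.
Qed.

Lemma untop_clone S : is_block_subalgebra S -> is_clone (untop S).
Proof.
case=> _ [Se Sq]; split; first by move=> n i; exact: (Se (val i)).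
split => [n k f g Sf Sg | n f Sf _ g fg]; first by rewrite /untop /= top_comp; exact: Sq.
rewrite /untop /=; suff -> : top g = top f by [].
by apply: functional_extensionality => s; rewrite /top (fg _ (s n)) snoc_prefix.
Qed.

Lemma tops_untop S : (forall phi, S phi -> block_univ phi) -> tops (untop S) = S.
Proof.
move=> S_univ; apply: functional_extensionality => phi.
apply: propositional_extensionality; split; first by case=> n [f [Sf ->]].
by move=> /[dup] /S_univ [n [f ->]] Sf; exists n, f.
Qed.

End BlockAlgebra.

Theorem corollary6p17 (A : Type) :
  exists F : (op A -> Prop) -> (((nat -> A) -> A) -> Prop),
    (forall C, is_clone C -> is_block_subalgebra (F C)) /\
    (forall C1 C2, is_clone C1 -> is_clone C2 ->
       (subset_of C1 C2 <-> subset_of (F C1) (F C2))) /\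
    (forall S, is_block_subalgebra S -> exists C, is_clone C /\ F C = S).
Proof.
exists (@tops A); split; first exact: tops_subalgebra.
split; first by move=> C1 C2 _; exact: tops_subsetP.
move=> S S_sub; exists (untop S); split; first exact: untop_clone.
by apply: tops_untop; case: S_sub.
Qed.
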